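(* Assume (A1)–(A2) and fix $K\ge1$. Let $v,w:[0,\infty)\times\mathbb{Z}\to\mathbb{R}$, $(t,i)\mapsto v_i(t),w_i(t)$, be continuously differentiable in $t$ and bounded on $[0,T]\times\mathbb{Z}$ for each $T>0$, such that $v$ is a subsolution and $w$ a supersolution of $$\frac{1}{\log K}\frac{d}{dt}n_i(t)=R(i\delta_K)n_i(t)+\sum_{l\in\mathbb{Z}}p((l+i)\delta_K)h_KG(lh_K)n_{l+i}(t),\quad t>0,\ i\in\mathbb{Z},$$ i.e. $v$ satisfies this with ''$\le$'' and $w$ with ''$\ge$'' in place of ''$=$''. If $v_i(0)\le w_i(0)$ for all $i$, then $v_i(t)\le w_i(t)$ for all $t\ge0$ and $i\in\mathbb{Z}$.
   Context: Let $R,p,G:\mathbb{R}\to\mathbb{R}$; $\delta_K>0$, $h_K:=\delta_K\log K$. (A1) $R,p$ Lipschitz with $\underline{R}\le R\le\overline{R}$, $0<\underline{p}\le p\le\overline{p}$. (A2) $G$ positive continuous, $\int G=1$, $G(x)=f(x)e^{-|x|}$ with $0<\min f\le f\le\sup f<\infty$. *)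

From Stdlib Require Import Reals ZArith.
From Coquelicot Require Import Coquelicot.
Open Scope R_scope.

(* Sum over l in Z of a : Z -> R, as sum_{l>=0} a l + sum_{k>=0} a (-(k+1)).
   (Coquelicot's Series; in the theorem all such series converge absolutely.) *)
Definition sumZ (a : Z -> R) : R :=
  Series (fun k : nat => a (Z.of_nat k)) +
  Series (fun k : nat => a (- Z.of_nat (S k))%Z).

Definition lipschitz (f : R -> R) : Prop :=
  exists L : R, forall x y : R, Rabs (f x - f y) <= L * Rabs (x - y).

Definition C1_nonneg (f : R -> R) : Prop :=
  exists df : R -> R,
    (forall t, 0 < t -> is_derive f t (df t)) /\
    filterlim (fun h => (f h - f 0) / h) (at_right 0) (locally (df 0)) /\
    (forall t, 0 <= t ->
       filterlim df (within (fun s => 0 <= s) (locally t)) (locally (df t))).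

Definition bounded_on_strips (n : Z -> R -> R) : Prop :=
  forall T : R, 0 < T -> exists M : R,
    forall (i : Z) (t : R), 0 <= t <= T -> Rabs (n i t) <= M.

Definition rhs (Rf p G : R -> R) (delta h : R) (n : Z -> R -> R) (i : Z) (t : R) : R :=
  Rf (IZR i * delta) * n i t +
  sumZ (fun l : Z => p (IZR (l + i) * delta) * h * G (IZR l * h) * n (l + i)%Z t).

From Stdlib Require Import Reals ZArith Lra.
From Coquelicot Require Import Coquelicot.
Open Scope R_scope.

(* Put u = v - w.  Since the rates p((l+i) delta) h G(l h) are nonnegative and, because
   G <= fsup exp(-|x|), dominated uniformly in i by the summable kernel
   pmax fsup h exp(-|l h|), subtracting the two inequalities gives, whenever u_j(t) <= mu
   for all j, u_i' <= a_i u_i + C mu, where a_i = ln K * R(i delta) is bounded by some A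
   and C is ln K times the sum of that kernel.
   On a time step of length d with C d exp(2 A d) <= 1/2, an integrating-factor (Gronwall)
   estimate shows: if u <= 0 at the start of the step and u <= mu on it, then u <= mu/2
   on it.  Iterating from the a priori bound on the strip gives u <= 0 on the step, and
   finitely many steps reach any t. *)

Lemma Series_nonneg (a : nat -> R) :
  ex_series a -> (forall n, 0 <= a n) -> 0 <= Series a.
Proof.
  intros Ha Hpos.
  rewrite <- (Rmult_0_l (Series a)), <- Series_scal_l.
  apply Series_le; [|exact Ha].
  intros n; specialize (Hpos n); lra.
Qed.

Lemma Series_le_of_ex (a b : nat -> R) :
  ex_series a -> ex_series b -> (forall n, a n <= b n) -> Series a <= Series b.
Proof.
  intros Ha Hb Hab.
  enough (0 <= Series b - Series a) by lra.
  rewrite <- Series_minus by assumption.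
  apply Series_nonneg; [exact (ex_series_minus b a Hb Ha)|].
  intros n; specialize (Hab n); lra.
Qed.

Definition ex_sumZ (a : Z -> R) : Prop :=
  ex_series (fun k : nat => a (Z.of_nat k)) /\
  ex_series (fun k : nat => a (- Z.of_nat (S k))%Z).

Lemma ex_sumZ_le (a b : Z -> R) :
  (forall l, Rabs (a l) <= b l) -> ex_sumZ b -> ex_sumZ a.
Proof.
  intros Hab [Hb1 Hb2].
  split; (eapply (@ex_series_le R_AbsRing R_CompleteNormedModule);
    [intros k; apply Hab | assumption]).
Qed.

Lemma ex_sumZ_minus (a b : Z -> R) :
  ex_sumZ a -> ex_sumZ b -> ex_sumZ (fun l => a l - b l).
Proof.
  intros [Ha1 Ha2] [Hb1 Hb2].
  split; apply (ex_series_minus (V := R_NormedModule)); assumption.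
Qed.

Lemma ex_sumZ_scal_l (c : R) (a : Z -> R) :
  ex_sumZ a -> ex_sumZ (fun l => c * a l).
Proof.
  intros [Ha1 Ha2].
  split; apply (ex_series_scal_l (V := R_NormedModule)); assumption.
Qed.

Lemma sumZ_minus (a b : Z -> R) :
  ex_sumZ a -> ex_sumZ b -> sumZ (fun l => a l - b l) = sumZ a - sumZ b.
Proof.
  intros [Ha1 Ha2] [Hb1 Hb2]. unfold sumZ.
  rewrite !Series_minus by assumption. ring.
Qed.

Lemma sumZ_scal_l (c : R) (a : Z -> R) : sumZ (fun l => c * a l) = c * sumZ a.
Proof. unfold sumZ. rewrite !Series_scal_l. ring. Qed.

Lemma sumZ_le (a b : Z -> R) :
  ex_sumZ a -> ex_sumZ b -> (forall l, a l <= b l) -> sumZ a <= sumZ b.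
Proof.
  intros [Ha1 Ha2] [Hb1 Hb2] Hab. unfold sumZ.
  apply Rplus_le_compat; apply Series_le_of_ex; auto.
Qed.

Lemma sumZ_weighted_sub_le (c kappa n1 n2 : Z -> R) (M mu : R) :
  (forall l, 0 <= c l <= kappa l) -> ex_sumZ kappa ->
  (forall l, Rabs (n1 l) <= M) -> (forall l, Rabs (n2 l) <= M) ->
  0 <= mu -> (forall l, n1 l - n2 l <= mu) ->
  sumZ (fun l => c l * n1 l) - sumZ (fun l => c l * n2 l) <= mu * sumZ kappa.
Proof.
  intros Hc Hkappa Hn1 Hn2 Hmu H12.
  assert (Hdom : forall n : Z -> R, (forall l, Rabs (n l) <= M) ->
            ex_sumZ (fun l => c l * n l)).
  { intros n Hn. apply (ex_sumZ_le _ (fun l => M * kappa l));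
      [|exact (ex_sumZ_scal_l M kappa Hkappa)].
    intros l. specialize (Hc l). specialize (Hn l).
    rewrite Rabs_mult, (Rabs_pos_eq (c l)) by lra.
    assert (0 <= Rabs (n l)) by apply Rabs_pos.
    nra. }
  rewrite <- sumZ_minus, <- sumZ_scal_l by auto.
  apply sumZ_le.
  - apply ex_sumZ_minus; auto.
  - apply ex_sumZ_scal_l; exact Hkappa.
  - intros l. specialize (Hc l). specialize (H12 l). nra.
Qed.

Lemma sumZ_nonneg (a : Z -> R) : ex_sumZ a -> (forall l, 0 <= a l) -> 0 <= sumZ a.
Proof.
  intros [Ha1 Ha2] Hpos. unfold sumZ.
  apply Rplus_le_le_0_compat; apply Series_nonneg; auto.
Qed.

Lemma exp_neg_INR_mul (h : R) (k : nat) : exp (- (INR k * h)) = exp (- h) ^ k.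
Proof.
  induction k as [|k IHk]; simpl pow.
  - rewrite Rmult_0_l, Ropp_0. apply exp_0.
  - rewrite <- IHk, <- exp_plus, S_INR. f_equal. ring.
Qed.

Lemma ex_sumZ_exp_neg_abs (h : R) : 0 < h ->
  ex_sumZ (fun l => exp (- Rabs (IZR l * h))).
Proof.
  intros Hh.
  assert (Hgeom : ex_series (fun k => exp (- h) ^ k)).
  { apply ex_series_geom. rewrite Rabs_pos_eq by (left; apply exp_pos).
    rewrite <- exp_0. apply exp_increasing. lra. }
  split.
  - apply (ex_series_ext (fun k => exp (- h) ^ k)); [|exact Hgeom].
    intros k. rewrite <- exp_neg_INR_mul, <- INR_IZR_INZ, Rabs_mult.
    rewrite !Rabs_pos_eq by (lra || apply pos_INR). reflexivity.
  - apply (ex_series_ext (fun k => exp (- h) * exp (- h) ^ k));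
      [|exact (ex_series_scal_l (V := R_NormedModule) _ _ Hgeom)].
    intros k. change (exp (- h) * exp (- h) ^ k) with (exp (- h) ^ S k).
    rewrite <- exp_neg_INR_mul, opp_IZR, <- INR_IZR_INZ, Rabs_mult, Rabs_Ropp.
    rewrite !Rabs_pos_eq by (lra || apply pos_INR). reflexivity.
Qed.

Lemma ex_sumZ_laplace_kernel (h : R) : 0 <= h ->
  ex_sumZ (fun l => h * exp (- Rabs (IZR l * h))).
Proof.
  intros [Hh | <-].
  - apply ex_sumZ_scal_l, ex_sumZ_exp_neg_abs, Hh.
  - apply (ex_sumZ_le _ (fun l => exp (- Rabs (IZR l * 1)))).
    + intros l. rewrite Rmult_0_l, Rabs_R0. left; apply exp_pos.
    + apply ex_sumZ_exp_neg_abs, Rlt_0_1.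
Qed.

Section FilterlimR.
Context {T : Type} {F : (T -> Prop) -> Prop} {FF : Filter F}.

Lemma filterlim_Rplus (f g : T -> R) (l1 l2 : R) :
  filterlim f F (locally l1) -> filterlim g F (locally l2) ->
  filterlim (fun x => f x + g x) F (locally (l1 + l2)).
Proof. intros Hf Hg. exact (filterlim_comp_2 f g plus Hf Hg (filterlim_plus l1 l2)). Qed.

Lemma filterlim_Rminus (f g : T -> R) (l1 l2 : R) :
  filterlim f F (locally l1) -> filterlim g F (locally l2) ->
  filterlim (fun x => f x - g x) F (locally (l1 - l2)).
Proof.
  intros Hf Hg. apply filterlim_Rplus; [exact Hf|].
  exact (@filterlim_comp _ _ _ g opp F _ _ Hg (filterlim_opp (V := R_NormedModule) l2)).
Qed.

Lemma filterlim_Rmult (f g : T -> R) (l1 l2 : R) :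
  filterlim f F (locally l1) -> filterlim g F (locally l2) ->
  filterlim (fun x => f x * g x) F (locally (l1 * l2)).
Proof. intros Hf Hg. exact (filterlim_comp_2 f g mult Hf Hg (filterlim_mult l1 l2)). Qed.

End FilterlimR.

Lemma continuous_at_right (f : R -> R) (t : R) :
  continuous f t -> filterlim f (at_right t) (locally (f t)).
Proof. apply filterlim_filter_le_1, filter_le_within. Qed.

Lemma C1_nonneg_is_derive (f : R -> R) (t : R) :
  C1_nonneg f -> 0 < t -> is_derive f t (Derive f t).
Proof.
  intros [df [Hdf _]] Ht.
  rewrite (is_derive_unique f t (df t)); auto.
Qed.

Lemma C1_nonneg_right_continuous (f : R -> R) (t : R) :
  C1_nonneg f -> 0 <= t -> filterlim f (at_right t) (locally (f t)).
Proof.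
  intros [df [Hdf [Hquot _]]] [Ht | <-].
  - apply continuous_at_right, (ex_derive_continuous (K := R_AbsRing) (V := R_NormedModule)).
    exists (df t). auto.
  - apply (filterlim_ext_loc (fun x => f 0 + x * ((f x - f 0) / x))).
    + exists (mkposreal 1 Rlt_0_1). intros x _ Hx. field. lra.
    + enough (H : filterlim (fun x => f 0 + x * ((f x - f 0) / x)) (at_right 0)
                    (locally (f 0 + 0 * df 0)))
        by (rewrite Rmult_0_l, Rplus_0_r in H; exact H).
      apply filterlim_Rplus; [apply filterlim_const|].
      apply filterlim_Rmult; [|exact Hquot].
      apply continuous_at_right, continuous_id.
Qed.

Lemma nonincreasing_of_derive_nonpos (phi dphi : R -> R) (a b : R) :
  a <= b -> filterlim phi (at_right a) (locally (phi a)) ->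
  (forall x, a < x <= b -> is_derive phi x (dphi x) /\ dphi x <= 0) ->
  phi b <= phi a.
Proof.
  intros [Hab | <-] Hcont Hd; [|lra].
  assert (Hmvt : forall x, a < x < b -> phi b <= phi x).
  { intros x Hx.
    destruct (MVT_gen phi x b dphi) as [c [Hc Hdiff]];
      rewrite ?Rmin_left, ?Rmax_right in * by lra.
    - intros y Hy. apply Hd; lra.
    - intros y Hy. apply continuity_pt_filterlim.
      apply (ex_derive_continuous (K := R_AbsRing) (V := R_NormedModule)).
      exists (dphi y). apply Hd; lra.
    - destruct (Hd c) as [_ Hc0]; [lra|]. nra. }
  apply (filterlim_le (F := at_right a) (fun _ => phi b) phi (phi b) (phi a)).
  - exists (mkposreal (b - a) ltac:(lra)). intros x Hx Hax.
    apply Hmvt. apply Rabs_lt_between' in Hx. simpl in Hx. lra.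
  - apply filterlim_const.
  - exact Hcont.
Qed.

Lemma exp_le_exp (x y : R) : x <= y -> exp x <= exp y.
Proof. intros [Hlt | ->]; [left; apply exp_increasing, Hlt | right; reflexivity]. Qed.

Lemma Rabs_le_Rmax_bounds (lo hi x : R) :
  lo <= x <= hi -> Rabs x <= Rmax (Rabs lo) (Rabs hi).
Proof.
  intros Hx. apply Rabs_le.
  pose proof (Rle_abs hi). pose proof (Rle_abs (- lo)). rewrite Rabs_Ropp in *.
  pose proof (Rmax_l (Rabs lo) (Rabs hi)). pose proof (Rmax_r (Rabs lo) (Rabs hi)).
  lra.
Qed.

Lemma integrating_factor_bound (y dy : R -> R) (a b t0 s : R) :
  t0 <= s -> 0 <= b ->
  filterlim y (at_right t0) (locally (y t0)) ->
  (forall x, t0 < x <= s -> is_derive y x (dy x) /\ dy x <= a * y x + b) ->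
  y t0 <= 0 ->
  exp (- a * (s - t0)) * y s <= b * exp (Rabs a * (s - t0)) * (s - t0).
Proof.
  intros Hts Hb Hcont Hdy Hy0.
  set (E := exp (Rabs a * (s - t0))).
  set (ef := fun x => exp (- a * (x - t0))).
  assert (Hef_le : forall x, t0 <= x <= s -> ef x <= E).
  { intros x Hx. unfold ef, E. apply exp_le_exp.
    assert (- a <= Rabs a) by (rewrite <- Rabs_Ropp; apply Rle_abs).
    assert (0 <= Rabs a) by apply Rabs_pos.
    nra. }
  (* With the integrating factor [ef], [dy <= a y + b] becomes [(ef y)' <= ef b <= E b]. *)
  assert (Hphi : ef s * y s - b * E * (s - t0) <= ef t0 * y t0 - b * E * (t0 - t0)).
  { apply (nonincreasing_of_derive_nonpos (fun x => ef x * y x - b * E * (x - t0))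
             (fun x => ef x * (dy x - a * y x) - b * E)); [lra| |].
    - apply filterlim_Rminus.
      + apply filterlim_Rmult; [|exact Hcont].
        apply (continuous_at_right ef).
        apply (ex_derive_continuous (K := R_AbsRing) (V := R_NormedModule)).
        unfold ef. auto_derive. exact I.
      + apply (continuous_at_right (fun x => b * E * (x - t0))).
        apply (ex_derive_continuous (K := R_AbsRing) (V := R_NormedModule)).
        auto_derive. exact I.
    - intros x Hx. destruct (Hdy x Hx) as [Hder Hle]. split.
      + unfold ef. auto_derive; [exists (dy x); exact Hder|].
        rewrite (is_derive_unique (fun x0 : R => y x0) x (dy x) Hder).
        unfold Rminus. ring.
      + assert (0 < ef x) by apply exp_pos.
        assert (ef x <= E) by (apply Hef_le; lra).
        nra. }
  assert (Hef_t0 : ef t0 = 1) by (unfold ef; rewrite Rminus_diag, Rmult_0_r; apply exp_0).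
  rewrite Hef_t0, Rminus_diag, Rmult_0_r in Hphi.
  unfold ef in Hphi. lra.
Qed.

Lemma gronwall_affine (y dy : R -> R) (a b t0 s : R) :
  t0 <= s -> 0 <= b ->
  filterlim y (at_right t0) (locally (y t0)) ->
  (forall x, t0 < x <= s -> is_derive y x (dy x) /\ dy x <= a * y x + b) ->
  y t0 <= 0 ->
  y s <= b * (s - t0) * exp (2 * Rabs a * (s - t0)).
Proof.
  intros Hts Hb Hcont Hdy Hy0.
  pose proof (integrating_factor_bound y dy a b t0 s Hts Hb Hcont Hdy Hy0) as Hbound.
  set (E := exp (Rabs a * (s - t0))) in Hbound.
  assert (Hy : y s = exp (a * (s - t0)) * (exp (- a * (s - t0)) * y s)).
  { rewrite <- Rmult_assoc, <- exp_plus.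
    replace (a * (s - t0) + - a * (s - t0)) with 0 by ring. rewrite exp_0. ring. }
  assert (Hexp_le : exp (a * (s - t0)) <= E).
  { apply exp_le_exp. pose proof (Rle_abs a). nra. }
  assert (HE2 : exp (2 * Rabs a * (s - t0)) = E * E).
  { unfold E. rewrite <- exp_plus. f_equal. ring. }
  replace (b * (s - t0) * exp (2 * Rabs a * (s - t0))) with (E * (b * E * (s - t0)))
    by (rewrite HE2; ring).
  rewrite Hy.
  assert (0 < exp (a * (s - t0))) by apply exp_pos.
  assert (0 <= b * E * (s - t0))
    by (apply Rmult_le_pos; [apply Rmult_le_pos; [exact Hb | left; apply exp_pos] | lra]).
  apply Rle_trans with (exp (a * (s - t0)) * (b * E * (s - t0))).
  - apply Rmult_le_compat_l; lra.
  - apply Rmult_le_compat_r; assumption.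
Qed.

Lemma le_0_of_le_halvings (x M : R) : (forall n, x <= M * (/ 2) ^ n) -> x <= 0.
Proof.
  intros Hx.
  assert (Hlim : is_lim_seq (fun n => M * (/ 2) ^ n) (Rbar_mult M 0)).
  { apply is_lim_seq_scal_l, is_lim_seq_geom. rewrite Rabs_pos_eq; lra. }
  pose proof (is_lim_seq_le (fun _ => x) _ _ _ Hx (is_lim_seq_const x) Hlim) as Hle.
  simpl in Hle. lra.
Qed.

Lemma step_size_exists (A C : R) : 0 <= A -> 0 <= C ->
  exists d, 0 < d /\ C * d * exp (2 * A * d) <= / 2.
Proof.
  intros HA HC.
  set (X := C * exp (2 * A)).
  assert (HX : 0 <= X) by (apply Rmult_le_pos; [lra | left; apply exp_pos]).
  set (d := / (1 + 2 * X)).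
  assert (Hd : 0 < d) by (apply Rinv_0_lt_compat; lra).
  assert (Hd1 : d <= 1) by (rewrite <- Rinv_1; apply Rinv_le_contravar; lra).
  assert (HXd : X * d <= / 2).
  { apply (Rmult_le_reg_r (1 + 2 * X)); [lra|].
    unfold d. rewrite Rmult_assoc, Rinv_l by lra. lra. }
  exists d. split; [exact Hd|].
  apply Rle_trans with (C * d * exp (2 * A)).
  - apply Rmult_le_compat_l; [nra|]. apply exp_le_exp. nra.
  - replace (C * d * exp (2 * A)) with (X * d) by (unfold X; ring). exact HXd.
Qed.

Section Comparison.

Variables (u du : Z -> R -> R) (a : Z -> R) (A C d : R).
Hypothesis a_bounded : forall i, Rabs (a i) <= A.
Hypothesis C_ge0 : 0 <= C.
Hypothesis d_gt0 : 0 < d.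
Hypothesis d_small : C * d * exp (2 * A * d) <= / 2.
Hypothesis u_right_continuous :
  forall i t, 0 <= t -> filterlim (u i) (at_right t) (locally (u i t)).
Hypothesis u_is_derive : forall i t, 0 < t -> is_derive (u i) t (du i t).
Hypothesis du_le : forall i t mu, 0 < t -> 0 <= mu -> (forall j, u j t <= mu) ->
  du i t <= a i * u i t + C * mu.
Hypothesis u_bounded : forall T, 0 < T -> exists M, forall i t, 0 <= t <= T -> u i t <= M.
Hypothesis u_init : forall i, u i 0 <= 0.

Lemma comparison_halving (t0 mu : R) : 0 <= t0 -> 0 <= mu ->
  (forall i, u i t0 <= 0) -> (forall i s, t0 <= s <= t0 + d -> u i s <= mu) ->
  forall i s, t0 <= s <= t0 + d -> u i s <= mu * / 2.
Proof.
  intros Ht0 Hmu Hinit Hbd i s Hs.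
  apply Rle_trans with (C * mu * (s - t0) * exp (2 * Rabs (a i) * (s - t0))).
  { apply (gronwall_affine (u i) (du i));
      [lra | apply Rmult_le_pos; assumption | apply u_right_continuous, Ht0 | | apply Hinit].
    intros x Hx. split; [apply u_is_derive; lra|].
    apply du_le; [lra | assumption |]. intros j. apply Hbd. lra. }
  assert (Ha := a_bounded i). assert (0 <= Rabs (a i)) by apply Rabs_pos.
  assert (exp (2 * Rabs (a i) * (s - t0)) <= exp (2 * A * d)) by (apply exp_le_exp; nra).
  assert (0 <= C * mu) by (apply Rmult_le_pos; assumption).
  assert (0 < exp (2 * Rabs (a i) * (s - t0))) by apply exp_pos.
  apply Rle_trans with (mu * (C * d * exp (2 * A * d))); [|apply Rmult_le_compat_l; assumption].
  replace (mu * (C * d * exp (2 * A * d))) with (C * mu * d * exp (2 * A * d)) by ring.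
  apply Rmult_le_compat; [nra | lra | nra | assumption].
Qed.

Lemma comparison_on_step (t0 : R) : 0 <= t0 -> (forall i, u i t0 <= 0) ->
  forall i s, t0 <= s <= t0 + d -> u i s <= 0.
Proof.
  intros Ht0 Hinit.
  destruct (u_bounded (t0 + d)) as [M HM]; [lra|].
  assert (Hn : forall n i s, t0 <= s <= t0 + d -> u i s <= Rmax 0 M * (/ 2) ^ n).
  { induction n as [|n IHn]; intros i s Hs.
    - rewrite pow_O, Rmult_1_r. apply Rle_trans with M; [apply HM; lra | apply Rmax_r].
    - rewrite <- tech_pow_Rmult, (Rmult_comm (/ 2)), <- Rmult_assoc.
      apply (comparison_halving t0); auto.
      apply Rmult_le_pos; [apply Rmax_l | apply pow_le; lra]. }
  intros i s Hs. apply (le_0_of_le_halvings _ (Rmax 0 M)). intros n. apply Hn, Hs.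
Qed.

Lemma comparison_upto (N : nat) : forall i s, 0 <= s <= INR N * d -> u i s <= 0.
Proof.
  induction N as [|N IHN]; intros i s Hs.
  - simpl in Hs. replace s with 0 by lra. apply u_init.
  - rewrite S_INR in Hs.
    assert (0 <= INR N * d) by (apply Rmult_le_pos; [apply pos_INR | lra]).
    destruct (Rle_dec s (INR N * d)); [apply IHN; lra|].
    apply (comparison_on_step (INR N * d)); [assumption | | lra].
    intros j. apply IHN. lra.
Qed.

Theorem comparison_principle (t : R) (i : Z) : 0 <= t -> u i t <= 0.
Proof.
  intros Ht. destruct (INR_archimed d t d_gt0) as [N HN].
  apply (comparison_upto N). lra.
Qed.

End Comparison.

Lemma rhs_sub_le (Rf p G : R -> R) (delta h : R) (v w : Z -> R -> R)
    (kappa : Z -> R) (i : Z) (t M mu : R) :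
  (forall l, 0 <= p (IZR (l + i) * delta) * h * G (IZR l * h) <= kappa l) ->
  ex_sumZ kappa ->
  (forall j, Rabs (v j t) <= M) -> (forall j, Rabs (w j t) <= M) ->
  0 <= mu -> (forall j, v j t - w j t <= mu) ->
  rhs Rf p G delta h v i t - rhs Rf p G delta h w i t <=
    Rf (IZR i * delta) * (v i t - w i t) + mu * sumZ kappa.
Proof.
  intros Hc Hkappa Hv Hw Hmu Hvw. unfold rhs.
  pose proof (sumZ_weighted_sub_le (fun l => p (IZR (l + i) * delta) * h * G (IZR l * h))
                kappa (fun l => v (l + i)%Z t) (fun l => w (l + i)%Z t) M mu
                Hc Hkappa (fun l => Hv _) (fun l => Hw _) Hmu (fun l => Hvw _)) as Hsum.
  lra.
Qed.

Section Model.

Variables (Rf p G : R -> R) (delta lam pmax gmax : R) (v w : Z -> R -> R).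
Hypothesis delta_ge0 : 0 <= delta.
Hypothesis lam_ge0 : 0 <= lam.
Hypothesis p_bounds : forall x, 0 <= p x <= pmax.
Hypothesis G_bounds : forall x, 0 <= G x <= gmax * exp (- Rabs x).
Hypothesis v_C1 : forall i, C1_nonneg (v i).
Hypothesis w_C1 : forall i, C1_nonneg (w i).
Hypothesis v_bounded : bounded_on_strips v.
Hypothesis w_bounded : bounded_on_strips w.
Hypothesis v_sub : forall i t, 0 < t ->
  Derive (v i) t <= lam * rhs Rf p G delta (delta * lam) v i t.
Hypothesis w_super : forall i t, 0 < t ->
  Derive (w i) t >= lam * rhs Rf p G delta (delta * lam) w i t.

Definition gap (i : Z) (t : R) : R := v i t - w i t.

Definition rate_majorant (l : Z) : R :=
  pmax * gmax * (delta * lam * exp (- Rabs (IZR l * (delta * lam)))).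

Lemma rate_majorant_summable : ex_sumZ rate_majorant.
Proof.
  apply ex_sumZ_scal_l, ex_sumZ_laplace_kernel, Rmult_le_pos; assumption.
Qed.

Lemma rate_le_majorant (i l : Z) :
  0 <= p (IZR (l + i) * delta) * (delta * lam) * G (IZR l * (delta * lam)) <=
    rate_majorant l.
Proof.
  unfold rate_majorant.
  set (h := delta * lam).
  assert (Hh : 0 <= h) by (apply Rmult_le_pos; assumption).
  destruct (p_bounds (IZR (l + i) * delta)) as [Hp0 Hp1].
  destruct (G_bounds (IZR l * h)) as [HG0 HG1].
  split.
  - apply Rmult_le_pos; [apply Rmult_le_pos|]; assumption.
  - replace (pmax * gmax * (h * exp (- Rabs (IZR l * h))))
      with (pmax * h * (gmax * exp (- Rabs (IZR l * h)))) by ring.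
    apply Rmult_le_compat; [apply Rmult_le_pos; assumption | assumption | | assumption].
    apply Rmult_le_compat_r; assumption.
Qed.

Lemma rate_majorant_sum_nonneg : 0 <= sumZ rate_majorant.
Proof.
  apply sumZ_nonneg; [exact rate_majorant_summable|].
  intros l. exact (Rle_trans _ _ _ (proj1 (rate_le_majorant 0 l))
                     (proj2 (rate_le_majorant 0 l))).
Qed.

Lemma gap_right_continuous (i : Z) (t : R) :
  0 <= t -> filterlim (gap i) (at_right t) (locally (gap i t)).
Proof.
  intros Ht. apply filterlim_Rminus; apply C1_nonneg_right_continuous; auto.
Qed.

Lemma gap_is_derive (i : Z) (t : R) :
  0 < t -> is_derive (gap i) t (Derive (v i) t - Derive (w i) t).
Proof.
  intros Ht. apply (is_derive_minus (V := R_NormedModule));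
    apply C1_nonneg_is_derive; auto.
Qed.

Lemma gap_bounded (T : R) :
  0 < T -> exists M, forall i t, 0 <= t <= T -> gap i t <= M.
Proof.
  intros HT.
  destruct (v_bounded T HT) as [Mv HMv], (w_bounded T HT) as [Mw HMw].
  exists (Mv + Mw). intros i t Ht. unfold gap.
  pose proof (proj1 (Rabs_le_between _ _) (HMv i t Ht)).
  pose proof (proj1 (Rabs_le_between _ _) (HMw i t Ht)).
  lra.
Qed.

Lemma gap_derive_le (i : Z) (t mu : R) :
  0 < t -> 0 <= mu -> (forall j, gap j t <= mu) ->
  Derive (v i) t - Derive (w i) t <=
    lam * Rf (IZR i * delta) * gap i t + lam * sumZ rate_majorant * mu.
Proof.
  intros Ht Hmu Hgap.
  destruct (v_bounded t Ht) as [Mv HMv], (w_bounded t Ht) as [Mw HMw].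
  assert (Hrhs := rhs_sub_le Rf p G delta (delta * lam) v w rate_majorant i t
                    (Rmax Mv Mw) mu (rate_le_majorant i) rate_majorant_summable).
  assert (Hdiff : rhs Rf p G delta (delta * lam) v i t - rhs Rf p G delta (delta * lam) w i t
                  <= Rf (IZR i * delta) * gap i t + mu * sumZ rate_majorant).
  { apply Hrhs; [| | exact Hmu | exact Hgap].
    - intros j. apply Rle_trans with Mv; [apply HMv; lra | apply Rmax_l].
    - intros j. apply Rle_trans with Mw; [apply HMw; lra | apply Rmax_r]. }
  pose proof (v_sub i t Ht). pose proof (w_super i t Ht).
  pose proof (Rmult_le_compat_l lam _ _ lam_ge0 Hdiff).
  lra.
Qed.

End Model.

Theorem proposition3p3
  (Rf p G : R -> R) (deltaK K : R) (v w : Z -> R -> R)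
  (* (A1) *)
  (HRlip : lipschitz Rf) (Hplip : lipschitz p)
  (HRbd : exists Rlo Rhi : R, forall x, Rlo <= Rf x <= Rhi)
  (Hpbd : exists plo phi : R, 0 < plo /\ forall x, plo <= p x <= phi)
  (* (A2) *)
  (HGpos : forall x, 0 < G x) (HGcont : forall x, continuous G x)
  (HGint : is_RInt_gen G (Rbar_locally m_infty) (Rbar_locally p_infty) 1)
  (HGf : exists (f : R -> R) (fmin fsup : R), 0 < fmin /\
           (forall x, fmin <= f x <= fsup) /\
           (forall x, G x = f x * exp (- Rabs x)))
  (Hdelta : 0 < deltaK) (HK : 1 <= K)
  (Hv1 : forall i, C1_nonneg (v i)) (Hw1 : forall i, C1_nonneg (w i))
  (Hvb : bounded_on_strips v) (Hwb : bounded_on_strips w)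
  (Hsub : forall (i : Z) (t : R), 0 < t ->
     Derive (v i) t <= ln K * rhs Rf p G deltaK (deltaK * ln K) v i t)
  (Hsuper : forall (i : Z) (t : R), 0 < t ->
     Derive (w i) t >= ln K * rhs Rf p G deltaK (deltaK * ln K) w i t)
  (H0 : forall i, v i 0 <= w i 0) :
  forall (t : R) (i : Z), 0 <= t -> v i t <= w i t.
Proof.
  destruct HRbd as [Rlo [Rhi HR]], Hpbd as [plo [pmax [Hplo Hp]]],
    HGf as [f [fmin [fsup [Hfmin [Hf HGf]]]]].
  assert (Hlam : 0 <= ln K) by (rewrite <- ln_1; apply ln_le; lra).
  assert (Hp' : forall x, 0 <= p x <= pmax) by (intros x; specialize (Hp x); lra).
  assert (HG : forall x, 0 <= G x <= fsup * exp (- Rabs x)).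
  { intros x. rewrite HGf. specialize (Hf x). pose proof (exp_pos (- Rabs x)). nra. }
  set (A := ln K * Rmax (Rabs Rlo) (Rabs Rhi)).
  assert (HA : forall i, Rabs (ln K * Rf (IZR i * deltaK)) <= A).
  { intros i. rewrite Rabs_mult, (Rabs_pos_eq (ln K) Hlam). apply Rmult_le_compat_l; [lra|].
    apply Rabs_le_Rmax_bounds, HR. }
  set (C := ln K * sumZ (rate_majorant deltaK (ln K) pmax fsup)).
  assert (HC : 0 <= C)
    by (apply Rmult_le_pos; [exact Hlam | apply (rate_majorant_sum_nonneg p G); auto; lra]).
  assert (HA0 : 0 <= A)
    by (apply Rmult_le_pos; [exact Hlam | apply (Rle_trans _ _ _ (Rabs_pos Rlo)), Rmax_l]).
  destruct (step_size_exists A C HA0 HC) as [d [Hd Hsmall]].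
  intros t i Ht.
  enough (gap v w i t <= 0) by (unfold gap in *; lra).
  apply (comparison_principle (gap v w) (fun j s => Derive (v j) s - Derive (w j) s)
           (fun j => ln K * Rf (IZR j * deltaK)) A C d); auto.
  - apply gap_right_continuous; assumption.
  - apply gap_is_derive; assumption.
  - apply (gap_derive_le Rf p G deltaK (ln K) pmax fsup); auto; lra.
  - apply gap_bounded; assumption.
  - intros j. unfold gap. specialize (H0 j). lra.
Qed.
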